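(* Fix $m\ge 2$, a nonempty proper subset $\mathcal{S}\subsetneq[m]=\{1,\dots,m\}$ with complement $\mathcal{S}^c$, and $\sigma_e^2>0$. Consider the linear model $y=\mathbf{z}^\top\mathbf{u}+e$ with fixed (non-random) $\mathbf{u}\in\mathbb{R}^m$, where $\mathbb{E}(\mathbf{z})=0$, $\mathrm{Var}(\mathbf{z})=\Sigma$ is positive definite, and $e$ is independent of $\mathbf{z}$ with mean $0$ and variance $\sigma_e^2$. Define the fixed-effects heritability $$h^2(\mathbf{u};\Sigma)=\frac{\mathbf{u}^\top\Sigma\mathbf{u}}{\mathbf{u}^\top\Sigma\mathbf{u}+\sigma_e^2}.$$ Suppose that the heritability attributable to $\mathcal{S}$ is a quadratic form in $\mathbf{u}$, namely for every positive definite $\Sigma$ there is a symmetric $m\times m$ matrix $\Gamma(\Sigma)$ with $$h^2_{\mathcal{S}}(\mathbf{u};\Sigma)=\frac{\mathbf{u}^\top\Gamma(\Sigma)\mathbf{u}}{\mathbf{u}^\top\Sigma\mathbf{u}+\sigma_e^2}\quad\text{for all }\mathbf{u}\in\mathbb{R}^m$$ (equivalently, after normalizing $\mathrm{Var}(y)=1$, $h^2_{\mathcal S}=\mathbf{u}^\top\Gamma(\Sigma)\mathbf{u}$), and that for every positive definite $\Sigma$: (i) $0\le h^2_{\mathcal{S}}(\mathbf{u};\Sigma)\le h^2(\mathbf{u};\Sigma)$ for all $\mathbf{u}\in\mathbb{R}^m$; (ii) $h^2_{\mathcal{S}}(\mathbf{u};\Sigma)=h^2(\mathbf{u};\Sigma)$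 if and only if $\mathbf{u}_{\mathcal{S}^c}=0$; (iii) $\Gamma(\Sigma)$ does not depend on the block $\Sigma_{\mathcal{S}^c,\mathcal{S}^c}$, i.e. $\Gamma(\Sigma)=\Gamma(\Sigma')$ whenever $\Sigma,\Sigma'$ are positive definite and agree in all entries outside the $\mathcal{S}^c\times\mathcal{S}^c$ block. Then for every positive definite $\Sigma$ and every $\mathbf{u}\in\mathbb{R}^m$, $$h^2_{\mathcal{S}}(\mathbf{u};\Sigma)=\frac{\mathbf{u}^\top\Sigma\mathbf{u}-\mathbf{u}_{\mathcal{S}^c}^\top\Sigma_{\mathcal{S}^c\mid\mathcal{S}}\mathbf{u}_{\mathcal{S}^c}}{\mathbf{u}^\top\Sigma\mathbf{u}+\sigma_e^2},$$ where $\Sigma_{\mathcal{S}^c\mid\mathcal{S}}=\Sigma_{\mathcal{S}^c,\mathcal{S}^c}-\Sigma_{\mathcal{S}^c,\mathcal{S}}\Sigma_{\mathcal{S},\mathcal{S}}^{-1}\Sigma_{\mathcal{S},\mathcal{S}^c}$.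
   Context: For $\mathcal{S}_1,\mathcal{S}_2\subseteq[m]$, $\Sigma_{\mathcal{S}_1,\mathcal{S}_2}$ denotes the submatrix of $\Sigma$ with rows indexed by $\mathcal{S}_1$ and columns indexed by $\mathcal{S}_2$; $\mathbf{u}_{\mathcal{S}}$ denotes the subvector of $\mathbf{u}$ with coordinates in $\mathcal{S}$. *)

From HB Require Import structures.
From mathcomp Require Import all_boot all_order all_algebra.
Set Implicit Arguments. Unset Strict Implicit. Unset Printing Implicit Defensive.
Import Order.TTheory GRing.Theory Num.Theory.
Local Open Scope ring_scope.

Section Defs.
Variables (R : rcfType) (m : nat).

Definition qf (u : 'cV[R]_m) (A : 'M[R]_m) : R := (u^T *m A *m u) 0 0.

Definition posdef (A : 'M[R]_m) : Prop :=
  A^T = A /\ forall u : 'cV[R]_m, u != 0 -> 0 < qf u A.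

Definition h2 (se2 : R) (Sigma : 'M[R]_m) (u : 'cV[R]_m) : R :=
  qf u Sigma / (qf u Sigma + se2).

Definition h2S (se2 : R) (Gamma : 'M[R]_m -> 'M[R]_m) (Sigma : 'M[R]_m)
  (u : 'cV[R]_m) : R :=
  qf u (Gamma Sigma) / (qf u Sigma + se2).

(* submatrix Sigma_{A,B}, indices enumerated increasingly *)
Definition subm (A B : {set 'I_m}) (M : 'M[R]_m) : 'M[R]_(#|A|, #|B|) :=
  \matrix_(i < #|A|, j < #|B|) M (enum_val i) (enum_val j).

Definition subv (A : {set 'I_m}) (u : 'cV[R]_m) : 'cV[R]_#|A| :=
  \col_(i < #|A|) u (enum_val i) 0.

Definition schur (S : {set 'I_m}) (Sigma : 'M[R]_m) : 'M[R]_#|~: S| :=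
  subm (~: S) (~: S) Sigma
  - subm (~: S) S Sigma *m invmx (subm S S Sigma) *m subm S (~: S) Sigma.

End Defs.

(* Write P_S, P_c for the 0/1 selection matrices of S and of its complement, so that
   u_S = P_S^T u, Sigma_{A,B} = P_A^T Sigma P_B and P_S P_S^T + P_c P_c^T = 1.
   Completing the square in the S-block gives, for positive definite Sigma,
       u^T Sigma u = (positive form in a shifted u_S) + u_{S^c}^T Sigma_{S^c|S} u_{S^c},
   and the first term vanishes on the "residual" of u, a vector differing from u by
   an S-supported vector.  Multiplying (i)-(ii) by the positive denominator, the form
   Q = Sigma - Gamma(Sigma) is positive semidefinite and vanishes on S-supported
   vectors, hence Q is blind to S-supported perturbations; evaluating at the residual
   and using Gamma >= 0 yields the lower bound u^T Gamma u >= u^T Sigma u - Schur term.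
   For the upper bound, (iii) lets us replace the S^c block of Sigma so that its
   Schur complement becomes e*I, for any e > 0, without changing Gamma(Sigma); the
   bound Gamma <= Sigma' then gives u^T Gamma u <= u^T Sigma u - Schur term + e|u_{S^c}|^2,
   and e -> 0 concludes. *)
From HB Require Import structures.
From mathcomp Require Import all_boot all_order all_algebra.
From mathcomp Require Import lra.
Import Order.TTheory GRing.Theory Num.Theory.
Local Open Scope ring_scope.
Set Implicit Arguments. Unset Strict Implicit.

Section Selection.
Variables (R : pzRingType) (m : nat).

Definition sel (A : {set 'I_m}) : 'M[R]_(m, #|A|) :=
  \matrix_(i < m, k < #|A|) (i == enum_val k)%:R.

Lemma sel_tmulE (A B : {set 'I_m}) k l :
  ((sel A)^T *m sel B) k l = (enum_val k == enum_val l)%:R.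
Proof.
rewrite !mxE (bigD1 (enum_val k)) //= big1 ?addr0; first by rewrite !mxE eqxx mul1r.
by move=> i /negPf ni; rewrite !mxE ?ni ?(eq_sym i) ?ni ?mul0r ?mulr0.
Qed.

Lemma sel_orthonormal (A : {set 'I_m}) : (sel A)^T *m sel A = 1%:M.
Proof.
apply/matrixP => k l; rewrite sel_tmulE !mxE.
by case: (eqVneq k l) => [->|kl]; rewrite ?eqxx // (inj_eq enum_val_inj) (negPf kl).
Qed.

Lemma sel_compl_orth (S : {set 'I_m}) : (sel (~: S))^T *m sel S = 0.
Proof.
apply/matrixP => k l; rewrite sel_tmulE !mxE.
have := enum_valP k; have := enum_valP l; rewrite !inE => hl hk.
by case: eqP => // e; rewrite e hl in hk.
Qed.

Lemma sel_projE (A : {set 'I_m}) i j :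
  (sel A *m (sel A)^T) i j = ((i == j) && (i \in A))%:R.
Proof.
rewrite !mxE; case: (boolP (i \in A)) => iA.
  rewrite (bigD1 (enum_rank_in iA i)) //= big1 ?addr0.
    by rewrite !mxE enum_rankK_in // eqxx mul1r andbT eq_sym.
  move=> k nk; rewrite !mxE; case: eqP => [e|]; last by rewrite mul0r.
  by move: nk; rewrite -(inj_eq enum_val_inj) enum_rankK_in // e eqxx.
rewrite andbF big1 // => k _; rewrite !mxE; case: eqP => [e|]; last by rewrite mul0r.
by move: iA; rewrite e enum_valP.
Qed.

Lemma sel_partition (S : {set 'I_m}) :
  sel S *m (sel S)^T + sel (~: S) *m (sel (~: S))^T = 1%:M.
Proof.
apply/matrixP => i j; rewrite mxE !sel_projE !mxE inE.
by case: (i \in S); case: (i == j); rewrite ?addr0 ?add0r.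
Qed.

Lemma sel_compl_block_out (S : {set 'I_m}) (X : 'M[R]_#|~: S|) i j :
  (i \in S) || (j \in S) -> (sel (~: S) *m X *m (sel (~: S))^T) i j = 0.
Proof.
move=> h; rewrite !mxE big1 // => k _; case/orP: h => h.
  rewrite !mxE big1 ?mul0r // => l _; rewrite !mxE; case: eqP => [e|]; last by rewrite mul0r.
  by have := enum_valP l; rewrite inE -e h.
rewrite !mxE; case: eqP => [e|]; last by rewrite mulr0.
by have := enum_valP k; rewrite inE -e h.
Qed.

End Selection.

Lemma subvE (R : rcfType) m (A : {set 'I_m}) (u : 'cV[R]_m) :
  subv A u = (sel R A)^T *m u.
Proof.
apply/matrixP => k z; rewrite !mxE (bigD1 (enum_val k)) //= big1 ?addr0.
  by rewrite ord1 !mxE eqxx mul1r.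
by move=> i /negPf ni; rewrite !mxE ?ni ?(eq_sym i) ?ni ?mul0r ?mulr0.
Qed.

Lemma submE (R : rcfType) m (A B : {set 'I_m}) (M : 'M[R]_m) :
  subm A B M = (sel R A)^T *m M *m sel R B.
Proof.
apply/matrixP => k l; rewrite !mxE (bigD1 (enum_val l)) //= big1 ?addr0.
  rewrite !mxE eqxx mulr1 (bigD1 (enum_val k)) //= big1 ?addr0; first by rewrite !mxE eqxx mul1r.
  by move=> i /negPf ni; rewrite !mxE ?ni ?(eq_sym i) ?ni ?mul0r ?mulr0.
by move=> i /negPf ni; rewrite !mxE ni mulr0.
Qed.

Lemma subv_compl_sel (R : rcfType) m (S : {set 'I_m}) (a : 'cV[R]_#|S|) :
  subv (~: S) (sel R S *m a) = 0.
Proof. by rewrite subvE mulmxA sel_compl_orth mul0mx. Qed.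

Lemma block_complete_square (R : comPzRingType) s c (a : 'cV[R]_s) (b : 'cV[R]_c)
    (A M : 'M[R]_s) (B : 'M[R]_(s, c)) (C : 'M[R]_c) :
  A *m M = 1%:M -> M *m A = 1%:M -> M^T = M ->
  a^T *m A *m a + a^T *m B *m b + b^T *m B^T *m a + b^T *m C *m b =
  (a + M *m (B *m b))^T *m A *m (a + M *m (B *m b)) + b^T *m (C - B^T *m M *m B) *m b.
Proof.
move=> hAM hMA hM; rewrite !linearD /= !trmx_mul hM ?mulmxDl ?mulmxDr ?mulmxA.
rewrite -[a^T *m A *m M]mulmxA hAM mulmx1 -[b^T *m B^T *m M *m A]mulmxA hMA mulmx1.
rewrite mulmxN mulNmx.
have -> : b^T *m (B^T *m M *m B) *m b = b^T *m B^T *m M *m B *m b by rewrite !mulmxA.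
rewrite -!addrA (addrC (b^T *m B^T *m M *m B *m b)) subrK.
by congr (_ + _); rewrite addrCA.
Qed.

Section QuadForm.
Variables (R : rcfType) (n : nat).
Implicit Types (u v x w : 'cV[R]_n) (A Q : 'M[R]_n).

Lemma qf0 A : qf 0 A = 0.
Proof. by rewrite /qf mulmx0 mxE. Qed.

Lemma qfB u (A B : 'M[R]_n) : qf u (A - B) = qf u A - qf u B.
Proof. by rewrite /qf mulmxBr mulmxBl !mxE. Qed.

Lemma qfZ (t : R) u A : qf (t *: u) A = t ^+ 2 * qf u A.
Proof. by rewrite /qf !linearZ /= -!scalemxAl !mxE mulrA expr2. Qed.

Lemma qf_scalar u (e : R) : qf u e%:M = e * \sum_k u k 0 ^+ 2.
Proof.
rewrite /qf mul_mx_scalar -scalemxAl mxE mxE; congr (_ * _).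
by apply: eq_bigr => k _; rewrite mxE expr2.
Qed.

Lemma sumsq_gt0 u : u != 0 -> 0 < \sum_k u k 0 ^+ 2.
Proof.
move=> nu; rewrite lt_def sumr_ge0 ?andbT; last by move=> k _; rewrite sqr_ge0.
apply/eqP => h; move/eqP: nu; apply; apply/matrixP => k z.
rewrite ord1 mxE; apply/eqP; rewrite -sqrf_eq0; apply/eqP.
by apply: (psumr_eq0P _ h) => // i _; rewrite sqr_ge0.
Qed.

Lemma qf_mulmx k (P : 'M[R]_(n, k)) (A : 'M[R]_n) (x : 'cV[R]_k) :
  qf x (P^T *m A *m P) = qf (P *m x) A.
Proof. by rewrite /qf trmx_mul !mulmxA. Qed.

Lemma qf_conj k (P : 'M[R]_(n, k)) (X : 'M[R]_k) u :
  qf u (P *m X *m P^T) = qf (P^T *m u) X.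
Proof. by rewrite /qf trmx_mul trmxK !mulmxA. Qed.

Lemma posdef_ge0 A : posdef A -> forall u, 0 <= qf u A.
Proof.
move=> [_ hA] u; case: (eqVneq u 0) => [->|nu]; first by rewrite qf0.
exact: ltW (hA u nu).
Qed.

Lemma qf_polar Q x y : Q^T = Q ->
  qf (x + y) Q = qf x Q + qf y Q + 2 * (x^T *m Q *m y) 0 0.
Proof.
move=> hQ; have sym : (y^T *m Q *m x) 0 0 = (x^T *m Q *m y) 0 0.
  transitivity ((y^T *m Q *m x)^T 0 0); first by rewrite [RHS]mxE.
  by rewrite !trmx_mul trmxK hQ mulmxA.
have entryD (X Y : 'M[R]_1) : (X + Y) 0 0 = X 0 0 + Y 0 0 by rewrite mxE.
rewrite /qf [(x + y)^T]linearD /= !mulmxDl !mulmxDr !entryD sym; lra.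
Qed.

(* A null vector of a positive semidefinite symmetric form is orthogonal to everything:
   otherwise the form would be negative somewhere on the line x + t w. *)
Lemma psd_null_orth Q x w : Q^T = Q -> (forall v, 0 <= qf v Q) ->
  qf w Q = 0 -> (x^T *m Q *m w) 0 0 = 0.
Proof.
move=> hQ hpsd hw; apply/eqP/negP => /negP nb.
set b := (x^T *m Q *m w) 0 0 in nb.
set t := - (qf x Q + 1) / (2 * b).
have twice_tb : 2 * (t * b) = - (qf x Q + 1).
  by rewrite /t mulrCA -mulrA mulVf ?mulr1 // mulf_neq0 // pnatr_eq0.
have := hpsd (x + t *: w); rewrite qf_polar // qfZ hw mulr0 addr0.
by rewrite -scalemxAr mxE -/b twice_tb; lra.
Qed.

Lemma qf_add_null Q x w : Q^T = Q -> (forall v, 0 <= qf v Q) ->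
  qf w Q = 0 -> qf (x + w) Q = qf x Q.
Proof.
by move=> hQ hpsd hw; rewrite qf_polar // hw psd_null_orth // mulr0 !addr0.
Qed.

End QuadForm.

Lemma le_of_forall_pos_slope (R : realFieldType) (x y s : R) : 0 <= s ->
  (forall e, 0 < e -> x <= y + e * s) -> x <= y.
Proof.
move=> hs h; apply/ler_addgt0Pr => e he.
have hs1 : 0 < s + 1 by rewrite ltr_wpDl.
apply: (le_trans (h _ (divr_gt0 he hs1))); rewrite lerD2l mulrAC ler_pdivrMr //.
by rewrite mulrDr mulr1 lerDl ltW.
Qed.

Section Schur.
Variables (R : rcfType) (m : nat) (S : {set 'I_m}) (Sigma : 'M[R]_m).
Hypothesis Sigma_pd : posdef Sigma.

Local Notation PS := (sel R S).
Local Notation PC := (sel R (~: S)).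
Local Notation SigSS := (PS^T *m Sigma *m PS).
Local Notation SigSC := (PS^T *m Sigma *m PC).

Let Sigma_sym : Sigma^T = Sigma. Proof. by case: Sigma_pd. Qed.

Lemma schurE : schur S Sigma =
  PC^T *m Sigma *m PC - SigSC^T *m invmx SigSS *m SigSC.
Proof. by rewrite /schur !submE !trmx_mul trmxK Sigma_sym !mulmxA. Qed.

Lemma principal_block_unit : SigSS \in unitmx.
Proof.
case: Sigma_pd => _ hp; rewrite unitmxE unitfE; apply/negP => /det0P [v nv hv].
have nv' : PS *m v^T != 0.
  apply: contra nv => /eqP h; rewrite -trmx_eq0.
  by rewrite -[v^T]mul1mx -(sel_orthonormal R S) -mulmxA h mulmx0.
by have := hp _ nv'; rewrite -qf_mulmx /qf trmxK hv mul0mx mxE ltxx.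
Qed.

Lemma schur_sym : (schur S Sigma)^T = schur S Sigma.
Proof.
rewrite schurE linearB /= !trmx_mul !trmxK trmx_inv !trmx_mul Sigma_sym.
by rewrite !trmxK !mulmxA.
Qed.

(* The S-part of u shifted so that the cross terms are absorbed. *)
Definition schur_shift (u : 'cV[R]_m) : 'cV[R]_#|S| :=
  PS^T *m u + invmx SigSS *m (SigSC *m (PC^T *m u)).

Lemma qf_schur_decomp u :
  qf u Sigma = qf (schur_shift u) SigSS + qf (PC^T *m u) (schur S Sigma).
Proof.
have entryD (X Y : 'M[R]_1) : X 0 0 + Y 0 0 = (X + Y) 0 0 by rewrite mxE.
rewrite schurE /qf /schur_shift entryD -block_complete_square; first last.
- by rewrite trmx_inv !trmx_mul trmxK Sigma_sym !mulmxA.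
- exact/mulVmx/principal_block_unit.
- exact/mulmxV/principal_block_unit.
set a := PS^T *m u; set b := PC^T *m u.
have hu : u = PS *m a + PC *m b by rewrite /a /b !mulmxA -mulmxDl sel_partition mul1mx.
rewrite [in LHS]hu !linearD /= !mulmxDl !trmx_mul !trmxK Sigma_sym !mulmxA !mxE.
by rewrite !addrA; congr (_ + _); rewrite addrAC.
Qed.

Lemma schur_le_qf u : qf (PC^T *m u) (schur S Sigma) <= qf u Sigma.
Proof.
by rewrite qf_schur_decomp lerDr qf_mulmx posdef_ge0.
Qed.

Definition schur_resid (u : 'cV[R]_m) : 'cV[R]_m := u - PS *m schur_shift u.

Lemma qf_schur_resid u :
  qf (schur_resid u) Sigma = qf (PC^T *m u) (schur S Sigma).
Proof.
have hC : PC^T *m schur_resid u = PC^T *m u.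
  by rewrite mulmxBr mulmxA sel_compl_orth mul0mx subr0.
have hS : schur_shift (schur_resid u) = 0.
  rewrite /schur_shift hC mulmxBr mulmxA sel_orthonormal mul1mx.
  by rewrite /schur_shift opprD addrA subrr sub0r addNr.
by rewrite qf_schur_decomp hS hC qf0 add0r.
Qed.

(* Replacing the S^c block of Sigma so that its Schur complement becomes e*I keeps
   positive definiteness, for any e > 0. *)
Lemma posdef_schur_shift e : 0 < e ->
  posdef (Sigma - PC *m (schur S Sigma - e%:M) *m PC^T).
Proof.
move=> he; case: (Sigma_pd) => _ hp; split.
  rewrite linearB /= !trmx_mul trmxK linearB /= schur_sym tr_scalar_mx Sigma_sym.
  by rewrite mulmxA.
move=> v nv; rewrite qfB qf_conj.
case: (eqVneq (PC^T *m v) 0) => [->|nb]; first by rewrite qf0 subr0 hp.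
rewrite qfB qf_scalar.
have := schur_le_qf v; have := mulr_gt0 he (sumsq_gt0 nb); lra.
Qed.

End Schur.

Section Characterization.
Variables (R : rcfType) (m : nat) (S : {set 'I_m}) (Gamma : 'M[R]_m -> 'M[R]_m).

(* The hypotheses of the proposition, with the common denominator cleared. *)
Hypothesis Gamma_sym : forall Sigma, posdef Sigma -> (Gamma Sigma)^T = Gamma Sigma.
Hypothesis Gamma_bounds : forall Sigma, posdef Sigma -> forall u : 'cV[R]_m,
  0 <= qf u (Gamma Sigma) /\ qf u (Gamma Sigma) <= qf u Sigma.
Hypothesis Gamma_exact : forall Sigma, posdef Sigma -> forall u : 'cV[R]_m,
  subv (~: S) u = 0 -> qf u (Gamma Sigma) = qf u Sigma.
Hypothesis Gamma_local : forall Sigma Sigma', posdef Sigma -> posdef Sigma' ->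
  (forall i j, ~~ ((i \notin S) && (j \notin S)) -> Sigma i j = Sigma' i j) ->
  Gamma Sigma = Gamma Sigma'.

Variables (Sigma : 'M[R]_m) (u : 'cV[R]_m).
Hypothesis Sigma_pd : posdef Sigma.

Local Notation PC := (sel R (~: S)).

(* Sigma - Gamma(Sigma) is psd and null on S-supported vectors, so it takes the
   same value at u and at its residual, where Sigma equals the Schur term. *)
Lemma Gamma_lower : qf u Sigma - qf (PC^T *m u) (schur S Sigma) <= qf u (Gamma Sigma).
Proof.
set Q := Sigma - Gamma Sigma.
have Q_sym : Q^T = Q by rewrite /Q linearB /= Gamma_sym //; case: Sigma_pd => ->.
have Q_psd v : 0 <= qf v Q by rewrite qfB subr_ge0; case: (Gamma_bounds Sigma_pd v).
have Q_null : qf (sel R S *m schur_shift S Sigma u) Q = 0.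
  by rewrite qfB Gamma_exact ?subrr ?subv_compl_sel.
have Q_resid : qf u Q = qf (schur_resid S Sigma u) Q.
  by rewrite -[in LHS](subrK (sel R S *m schur_shift S Sigma u) u) qf_add_null.
have [resid_ge0 _] := Gamma_bounds Sigma_pd (schur_resid S Sigma u).
by move: Q_resid; rewrite !(qfB _ Sigma) qf_schur_resid //; lra.
Qed.

(* Gamma(Sigma) = Gamma(Sigma_e) with Sigma_e of Schur complement e*I, and
   Gamma(Sigma_e) <= Sigma_e; let e tend to 0. *)
Lemma Gamma_upper : qf u (Gamma Sigma) <= qf u Sigma - qf (PC^T *m u) (schur S Sigma).
Proof.
apply: (@le_of_forall_pos_slope _ _ _ (\sum_k (PC^T *m u) k 0 ^+ 2)).
  by apply: sumr_ge0 => k _; rewrite sqr_ge0.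
move=> e he; have Sigma_e_pd := posdef_schur_shift S Sigma_pd he.
have -> : Gamma Sigma = Gamma (Sigma - PC *m (schur S Sigma - e%:M) *m PC^T).
  apply: Gamma_local => // i j hij.
  rewrite mxE [X in _ + X]mxE sel_compl_block_out ?oppr0 ?addr0 //.
  by move: hij; rewrite negb_and !negbK.
have [_] := Gamma_bounds Sigma_e_pd u.
by rewrite qfB qf_conj qfB qf_scalar; lra.
Qed.

Lemma Gamma_schur : qf u (Gamma Sigma) = qf u Sigma - qf (PC^T *m u) (schur S Sigma).
Proof. by apply/le_anti; rewrite Gamma_lower Gamma_upper. Qed.

End Characterization.

Unset Implicit Arguments. Set Strict Implicit.

Theorem proposition1 (R : rcfType) (m : nat) (S : {set 'I_m}) (se2 : R)
  (Gamma : 'M[R]_m -> 'M[R]_m) :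
  (2 <= m)%N -> S != set0 -> S != setT -> 0 < se2 ->
  (forall Sigma, posdef Sigma -> (Gamma Sigma)^T = Gamma Sigma) ->
  (* (i) *)
  (forall Sigma, posdef Sigma -> forall u : 'cV[R]_m,
     0 <= h2S se2 Gamma Sigma u /\ h2S se2 Gamma Sigma u <= h2 se2 Sigma u) ->
  (* (ii) *)
  (forall Sigma, posdef Sigma -> forall u : 'cV[R]_m,
     h2S se2 Gamma Sigma u = h2 se2 Sigma u <-> subv (~: S) u = 0) ->
  (* (iii) *)
  (forall Sigma Sigma', posdef Sigma -> posdef Sigma' ->
     (forall i j, ~~ ((i \notin S) && (j \notin S)) -> Sigma i j = Sigma' i j) ->
     Gamma Sigma = Gamma Sigma') ->
  forall Sigma, posdef Sigma -> forall u : 'cV[R]_m,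
    h2S se2 Gamma Sigma u =
      (qf u Sigma - ((subv (~: S) u)^T *m schur S Sigma *m subv (~: S) u) 0 0)
      / (qf u Sigma + se2).
Proof.
move=> _ _ _ se2_gt0 hsym hi hii hiii Sigma Sigma_pd u.
have den_gt0 (Sigma' : 'M[R]_m) (v : 'cV[R]_m) :
    posdef Sigma' -> 0 < qf v Sigma' + se2.
  by move=> hpd; have := posdef_ge0 hpd v; lra.
have bounds (Sigma' : 'M[R]_m) : posdef Sigma' -> forall v,
    0 <= qf v (Gamma Sigma') /\ qf v (Gamma Sigma') <= qf v Sigma'.
  move=> hpd v; have [] := hi Sigma' hpd v; have d := den_gt0 Sigma' v hpd.
  by rewrite /h2S /h2 pmulr_lge0 ?ler_pM2r ?invr_gt0.
have exact_off_Sc (Sigma' : 'M[R]_m) : posdef Sigma' -> forall v,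
    subv (~: S) v = 0 -> qf v (Gamma Sigma') = qf v Sigma'.
  move=> hpd v /(hii Sigma' hpd v) /(congr1 (fun z => z * (qf v Sigma' + se2))).
  by rewrite /h2S /h2 !divfK // gt_eqF // den_gt0.
by rewrite /h2S (Gamma_schur hsym bounds exact_off_Sc hiii) // -subvE.
Qed.
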